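(* Every normal distribution constraint is satisfiable.
   Context: A distribution constraint is a pair $C=\bigl((\mu^R)_{\emptyset\ne R\subseteq[n]},([t_j,T_j])_{j=1}^n\bigr)$ with $n\in\mathbb{N}$, $\mu^R\ge0$ for each nonempty $R\subseteq[n]$, and $0\le t_j\le T_j$ for each $j\in[n]$. $C$ is satisfiable if there exist reals $\mu^R_j\ge0$ ($R$ nonempty, $j\in[n]$) with $\mu^R_j=0$ for $j\notin R$, $\sum_j\mu^R_j=\mu^R$ for every $R$, and $\sum_R\mu^R_j\in[t_j,T_j]$ for every $j$. For nonempty $S\subseteq[n]$ set $m_C(S)=\sum_{\emptyset\ne R\subseteq S}\mu^R$, $M_C(S)=\sum_{R:\,R\cap S\ne\emptyset}\mu^R$, $t_C(S)=\sum_{j\in S}t_j$, $T_C(S)=\sum_{j\in S}T_j$. $C$ is normal if $t_C(S)\le M_C(S)$ and $m_C(S)\le T_C(S)$ for every nonempty $S\subseteq[n]$. *)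

From HB Require Import structures.
From mathcomp Require Import all_boot all_order all_algebra.
Set Implicit Arguments. Unset Strict Implicit. Unset Printing Implicit Defensive.
Import Order.TTheory GRing.Theory Num.Theory.
Local Open Scope ring_scope.

(* A distribution constraint on [n] = 'I_n :
   mu : {set 'I_n} -> R  (mu R for nonempty R; the value at set0 is ignored),
   t, T : 'I_n -> R  (the intervals [t_j, T_j]). *)
Definition dc_wf (R : realFieldType) (n : nat) (mu : {set 'I_n} -> R)
    (t T : 'I_n -> R) : Prop :=
  (forall S : {set 'I_n}, S != set0 -> 0 <= mu S) /\
  (forall j, 0 <= t j /\ t j <= T j).

Definition dc_m (R : realFieldType) n (mu : {set 'I_n} -> R) (S : {set 'I_n}) : R :=
  \sum_(Q : {set 'I_n} | (Q != set0) && (Q \subset S)) mu Q.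

Definition dc_M (R : realFieldType) n (mu : {set 'I_n} -> R) (S : {set 'I_n}) : R :=
  \sum_(Q : {set 'I_n} | Q :&: S != set0) mu Q.

Definition dc_t (R : realFieldType) n (t : 'I_n -> R) (S : {set 'I_n}) : R :=
  \sum_(j in S) t j.

Definition dc_normal (R : realFieldType) n (mu : {set 'I_n} -> R)
    (t T : 'I_n -> R) : Prop :=
  forall S : {set 'I_n}, S != set0 ->
    dc_t t S <= dc_M mu S /\ dc_m mu S <= dc_t T S.

Definition dc_satisfiable (R : realFieldType) n (mu : {set 'I_n} -> R)
    (t T : 'I_n -> R) : Prop :=
  exists x : {set 'I_n} -> 'I_n -> R,
    (forall Q j, Q != set0 -> 0 <= x Q j) /\
    (forall Q j, Q != set0 -> j \notin Q -> x Q j = 0) /\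
    (forall Q, Q != set0 -> \sum_j x Q j = mu Q) /\
    (forall j, t j <= \sum_(Q : {set 'I_n} | Q != set0) x Q j <= T j).

From HB Require Import structures.
From mathcomp Require Import all_boot all_order all_algebra.
From mathcomp Require Import lra.
Import Order.TTheory GRing.Theory Num.Theory.
Local Open Scope ring_scope.
Set Implicit Arguments. Unset Strict Implicit. Unset Printing Implicit Defensive.

(* Generalise to finite families of nonempty sets Q_i with weights w_i >= 0,
   repetitions allowed, and induct on sum_i (|Q_i| - 1).  If every Q_i is a singleton, giving
   all of w_i to the element of Q_i works: normality at {j} says exactly that the
   load of j lies in [t_j, T_j].  Otherwise pick j in some Q_i0 with |Q_i0| >= 2
   and split it into Q_i0 \ {j} with weight b and {j} with weight w_i0 - b.  The
   split family is normal iff b lies above finitely many lower bounds and below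
   finitely many upper bounds, indexed by sets S.  Each lower bound is below each
   upper bound because S |-> M(S) is submodular, S |-> m(S) is supermodular and an
   exchange inequality mixes the two, all three with a gain of w_i0 in exactly the
   configurations that arise; normality of the original family pays for the rest.
   A solution for the split family merges back into one for the original. *)

Section Intersects.
Variable T : finType.
Implicit Types A B S X : {set T}.

Definition intersects A B := A :&: B != set0.

Lemma intersectsP A B : reflect (exists2 x, x \in A & x \in B) (intersects A B).
Proof.
apply: (iffP (set0Pn (A :&: B))) => [[x /setIP[]]|[x xA xB]]; first by exists x.
by exists x; apply/setIP.
Qed.

Lemma intersectsS A B1 B2 : B1 \subset B2 -> intersects A B1 -> intersects A B2.
Proof. by move=> sB /intersectsP[x xA /(subsetP sB) xB]; apply/intersectsP; exists x. Qed.

Lemma intersectsUr A B1 B2 : intersects A (B1 :|: B2) = intersects A B1 || intersects A B2.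
Proof. by rewrite /intersects setIUr setU_eq0 negb_and. Qed.

Lemma intersectsU1l a A B : intersects (a |: A) B = (a \in B) || intersects A B.
Proof. by rewrite /intersects setIUl setU_eq0 negb_and setI_eq0 disjoints1 negbK. Qed.

Lemma intersects1l a B : intersects [set a] B = (a \in B).
Proof. by rewrite /intersects setI_eq0 disjoints1 negbK. Qed.

Lemma intersects1r a A : intersects A [set a] = (a \in A).
Proof. by rewrite /intersects setIC -/(intersects _ _) intersects1l. Qed.

(* In the next three inequalities the last summand on the left is the strict gain
   obtained when [X] is the set being split. *)
Lemma intersects_submod X S1 S2 :
  (intersects X (S1 :|: S2) + intersects X (S1 :&: S2)
     + [&& intersects X S1, intersects X S2 & ~~ intersects X (S1 :&: S2)]
   <= intersects X S1 + intersects X S2)%N.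
Proof.
have intersectsI : intersects X (S1 :&: S2) ==> intersects X S1 && intersects X S2.
  by apply/implyP => h; rewrite !(intersectsS _ h) ?subsetIl ?subsetIr.
rewrite intersectsUr; move: intersectsI.
by case: (intersects X S1) (intersects X S2) (intersects X (S1 :&: S2)) => [] [] [].
Qed.

Lemma subset_supermod X S1 S2 :
  ((X \subset S1) + (X \subset S2)
     + [&& ~~ (X \subset S1), ~~ (X \subset S2) & X \subset S1 :|: S2]
   <= (X \subset S1 :|: S2) + (X \subset S1 :&: S2))%N.
Proof.
have subU1 : (X \subset S1) ==> (X \subset S1 :|: S2).
  by apply/implyP => h; rewrite (subset_trans h) ?subsetUl.
have subU2 : (X \subset S2) ==> (X \subset S1 :|: S2).
  by apply/implyP => h; rewrite (subset_trans h) ?subsetUr.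
rewrite subsetI; move: subU1 subU2.
by case: (X \subset S1) (X \subset S2) (X \subset S1 :|: S2) => [] [] [].
Qed.

Lemma intersects_subset_exchange X S1 S2 :
  (intersects X (S1 :\: S2) + (X \subset S2)
     + [&& intersects X S1, ~~ intersects X (S1 :\: S2) & ~~ (X \subset S2)]
   <= intersects X S1 + (X \subset S2 :\: S1))%N.
Proof.
have intersectsD : intersects X (S1 :\: S2) ==> intersects X S1 && ~~ (X \subset S2).
  apply/implyP => h; rewrite (intersectsS _ h) ?subsetDl //=.
  by apply/negP => sX2; case/intersectsP: h => x xX; rewrite inE (subsetP sX2 _ xX).
have subD : (X \subset S2) ==> intersects X S1 || (X \subset S2 :\: S1).
  by apply/implyP => sX2; rewrite subsetD sX2 -setI_eq0 /intersects; case: eqP.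
move: intersectsD subD.
by case: (intersects X (S1 :\: S2)) (X \subset S2) (intersects X S1) (X \subset S2 :\: S1)
  => [] [] [] [].
Qed.

End Intersects.

Lemma ler_sum_indicators (R : realDomainType) (I : finType) (w : I -> R)
    (P1 P2 Q1 Q2 : pred I) (i0 : I) :
  (forall i, 0 <= w i) -> (forall i, (P1 i + P2 i + (i == i0) <= Q1 i + Q2 i)%N) ->
  \sum_(i | P1 i) w i + \sum_(i | P2 i) w i + w i0
    <= \sum_(i | Q1 i) w i + \sum_(i | Q2 i) w i.
Proof.
move=> w_ge0 le_ind.
have sumE (P : pred I) : \sum_(i | P i) w i = \sum_i w i *+ P i.
  by rewrite big_mkcond; apply: eq_bigr => i _; rewrite mulrb.
have -> : w i0 = \sum_(i | i == i0) w i by rewrite big_pred1_eq.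
rewrite !sumE -!big_split /=.
by apply: ler_sum => i _; rewrite -!mulrnDr ler_wpMn2l.
Qed.

Section Family.
Variables (R : realFieldType) (n : nat).
Implicit Types (t T : 'I_n -> R) (S : {set 'I_n}).

Definition fam_M (I : finType) (s : I -> {set 'I_n}) (w : I -> R) S :=
  \sum_(i | intersects (s i) S) w i.

Definition fam_m (I : finType) (s : I -> {set 'I_n}) (w : I -> R) S :=
  \sum_(i | s i \subset S) w i.

Definition fam_normal (I : finType) t T (s : I -> {set 'I_n}) (w : I -> R) :=
  forall S, dc_t t S <= fam_M s w S /\ fam_m s w S <= dc_t T S.

Definition fam_satisfiable (I : finType) t T (s : I -> {set 'I_n}) (w : I -> R) :=
  exists x : I -> 'I_n -> R,
    [/\ forall i j, 0 <= x i j,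
        forall i j, j \notin s i -> x i j = 0,
        forall i, \sum_j x i j = w i
      & forall j, t j <= \sum_i x i j <= T j].

Lemma dc_tID (f : 'I_n -> R) S1 S2 :
  dc_t f S1 = dc_t f (S1 :&: S2) + dc_t f (S1 :\: S2).
Proof. exact: big_setID. Qed.

Lemma dc_tUI (f : 'I_n -> R) S1 S2 :
  dc_t f (S1 :|: S2) + dc_t f (S1 :&: S2) = dc_t f S1 + dc_t f S2.
Proof.
rewrite [dc_t f (S1 :|: S2)](dc_tID _ _ S1) [dc_t f S2](dc_tID _ _ S1).
by rewrite setIUl setIid setDUl setDv set0U setIC (setUidPl (subsetIl _ _)); lra.
Qed.

Section Modularity.
Variables (I : finType) (s : I -> {set 'I_n}) (w : I -> R) (i0 : I).
Hypothesis w_ge0 : forall i, 0 <= w i.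
Local Notation M := (fam_M s w).
Local Notation m := (fam_m s w).

Lemma fam_M_strict_submod S1 S2 :
  intersects (s i0) S1 -> intersects (s i0) S2 -> ~~ intersects (s i0) (S1 :&: S2) ->
  M (S1 :|: S2) + M (S1 :&: S2) + w i0 <= M S1 + M S2.
Proof.
move=> h1 h2 h12; apply: ler_sum_indicators => // i.
rewrite (leq_trans _ (intersects_submod (s i) S1 S2)) // leq_add2l.
by case: eqP => [->|]; rewrite ?h1 ?h2 ?h12.
Qed.

Lemma fam_m_strict_supermod S1 S2 :
  ~~ (s i0 \subset S1) -> ~~ (s i0 \subset S2) -> s i0 \subset S1 :|: S2 ->
  m S1 + m S2 + w i0 <= m (S1 :|: S2) + m (S1 :&: S2).
Proof.
move=> h1 h2 h12; apply: ler_sum_indicators => // i.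
rewrite (leq_trans _ (subset_supermod (s i) S1 S2)) // leq_add2l.
by case: eqP => [->|]; rewrite ?h1 ?h2 ?h12.
Qed.

Lemma fam_Mm_strict_exchange S1 S2 :
  intersects (s i0) S1 -> ~~ intersects (s i0) (S1 :\: S2) -> ~~ (s i0 \subset S2) ->
  M (S1 :\: S2) + m S2 + w i0 <= M S1 + m (S2 :\: S1).
Proof.
move=> h1 h12 h2; apply: ler_sum_indicators => // i.
rewrite (leq_trans _ (intersects_subset_exchange (s i) S1 S2)) // leq_add2l.
by case: eqP => [->|]; rewrite ?h1 ?h2 ?h12.
Qed.

End Modularity.
End Family.

Section NormalFamily.
Variables (R : realFieldType) (n : nat) (t T : 'I_n -> R).
Variables (I : finType) (s : I -> {set 'I_n}) (w : I -> R) (i0 : I).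
Hypotheses (tT : forall j, t j <= T j) (w_ge0 : forall i, 0 <= w i).
Hypothesis normal : fam_normal t T s w.
Local Notation M := (fam_M s w).
Local Notation m := (fam_m s w).
Implicit Types S : {set 'I_n}.

Lemma normal_tt_le_MM S1 S2 :
  intersects (s i0) S1 -> intersects (s i0) S2 -> ~~ intersects (s i0) (S1 :&: S2) ->
  dc_t t S1 + dc_t t S2 + w i0 <= M S1 + M S2.
Proof.
move=> h1 h2 h12; have := fam_M_strict_submod w_ge0 h1 h2 h12.
have [tMU _] := normal (S1 :|: S2); have [tMI _] := normal (S1 :&: S2).
have := dc_tUI t S1 S2; lra.
Qed.

Lemma normal_mm_le_TT S1 S2 :
  ~~ (s i0 \subset S1) -> ~~ (s i0 \subset S2) -> s i0 \subset S1 :|: S2 ->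
  m S1 + m S2 + w i0 <= dc_t T S1 + dc_t T S2.
Proof.
move=> h1 h2 h12; have := fam_m_strict_supermod w_ge0 h1 h2 h12.
have [_ mTU] := normal (S1 :|: S2); have [_ mTI] := normal (S1 :&: S2).
have := dc_tUI T S1 S2; lra.
Qed.

Lemma normal_tm_le_TM S1 S2 :
  intersects (s i0) S1 -> ~~ intersects (s i0) (S1 :\: S2) -> ~~ (s i0 \subset S2) ->
  dc_t t S1 + m S2 + w i0 <= dc_t T S2 + M S1.
Proof.
move=> h1 h12 h2; have := fam_Mm_strict_exchange w_ge0 h1 h12 h2.
have [tMD _] := normal (S1 :\: S2); have [_ mTD] := normal (S2 :\: S1).
have tTI : dc_t t (S1 :&: S2) <= dc_t T (S1 :&: S2) by apply: ler_sum.
have := dc_tID t S1 S2; have := dc_tID T S2 S1; rewrite setIC; lra.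
Qed.

End NormalFamily.

Lemma big_option (R : Type) (idx : R) (op : Monoid.com_law idx) (I : finType)
    (F : option I -> R) :
  \big[op/idx]_o F o = op (F None) (\big[op/idx]_i F (Some i)).
Proof.
rewrite (bigD1 None) //=; congr (op _ _).
rewrite (reindex_omap Some id) /=; last by case.
by apply: eq_bigl => i; rewrite eqxx.
Qed.

Definition excess (T I : finType) (s : I -> {set T}) : nat := \sum_i (#|s i|).-1.

Section Split.
Variables (R : realFieldType) (n : nat) (t T : 'I_n -> R).
Variables (I : finType) (s : I -> {set 'I_n}) (w : I -> R) (i0 : I) (j : 'I_n).
Hypotheses (tT : forall j, t j <= T j) (w_ge0 : forall i, 0 <= w i).
Hypothesis normal : fam_normal t T s w.
Hypotheses (j_in : j \in s i0) (rest_neq0 : s i0 :\ j != set0).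
Local Notation M := (fam_M s w).
Local Notation m := (fam_m s w).
Local Notation rest := (s i0 :\ j).
Implicit Types S : {set 'I_n}.

Lemma intersects_split S : intersects (s i0) S = (j \in S) || intersects rest S.
Proof. by rewrite -{1}(setD1K j_in) intersectsU1l. Qed.

Lemma subset_split S : (s i0 \subset S) = (j \in S) && (rest \subset S).
Proof. by rewrite -{1}(setD1K j_in) subUset sub1set. Qed.

(* Normality of the split family at [S], solved for the weight [b] of [rest]; the
   cases imposing no condition on [b] are padded with [0] and [w i0]. *)
Definition split_lb S :=
  if j \in S then (if rest \subset S then 0 else m S + w i0 - dc_t T S)
  else (if intersects rest S then dc_t t S - M S + w i0 else 0).

Definition split_ub S :=
  if j \in S then (if intersects rest S then w i0 else M S - dc_t t S)
  else (if rest \subset S then dc_t T S - m S else w i0).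

Lemma split_lb_le_ub S1 S2 : split_lb S1 <= split_ub S2.
Proof.
have lb_le_w : split_lb S1 <= w i0.
  by have [] := normal S1; have := w_ge0 i0; rewrite /split_lb; do 2!case: ifP; lra.
have ub_ge0 : 0 <= split_ub S2.
  by have [] := normal S2; have := w_ge0 i0; rewrite /split_ub; do 2!case: ifP; lra.
move: lb_le_w ub_ge0; rewrite /split_lb /split_ub.
case: (boolP (j \in S1)) => j1; case: ifPn => r1; case: (boolP (j \in S2)) => j2;
  case: ifPn => r2 lb_w ub0; try lra.
- have h1 : intersects (s i0) S2 by rewrite intersects_split j2.
  have h2 : ~~ intersects (s i0) (S2 :\: S1).
    rewrite intersects_split inE j1 /=; apply: contra r2; apply: intersectsS; exact: subsetDl.
  have h3 : ~~ (s i0 \subset S1) by rewrite subset_split negb_and r1 orbT.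
  have := normal_tm_le_TM tT w_ge0 normal h1 h2 h3; lra.
- have h1 : ~~ (s i0 \subset S1) by rewrite subset_split negb_and r1 orbT.
  have h2 : ~~ (s i0 \subset S2) by rewrite subset_split (negbTE j2).
  have h12 : s i0 \subset S1 :|: S2.
    by rewrite subset_split inE j1 (subset_trans r2) ?subsetUr.
  have := normal_mm_le_TT w_ge0 normal h1 h2 h12; lra.
- have h1 : intersects (s i0) S1 by rewrite intersects_split r1 orbT.
  have h2 : intersects (s i0) S2 by rewrite intersects_split j2.
  have h12 : ~~ intersects (s i0) (S1 :&: S2).
    rewrite intersects_split inE (negbTE j1) /=.
    apply: contra r2; apply: intersectsS; exact: subsetIr.
  have := normal_tt_le_MM w_ge0 normal h1 h2 h12; lra.
- have h1 : intersects (s i0) S1 by rewrite intersects_split r1 orbT.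
  have h12 : ~~ intersects (s i0) (S1 :\: S2).
    rewrite intersects_split inE (negbTE j1) andbF /=.
    by apply/negP => /intersectsP[x /(subsetP r2) xS2]; rewrite inE xS2.
  have h2 : ~~ (s i0 \subset S2) by rewrite subset_split (negbTE j2).
  have := normal_tm_le_TM tT w_ge0 normal h1 h12 h2; lra.
Qed.

Definition split_set (o : option I) : {set 'I_n} :=
  if o is Some i then (if i == i0 then rest else s i) else [set j].

Definition split_weight (b : R) (o : option I) : R :=
  if o is Some i then (if i == i0 then b else w i) else w i0 - b.

Lemma sum_split b (P : pred {set 'I_n}) :
  \sum_(o | P (split_set o)) split_weight b o
  = \sum_(i | P (s i)) w i - w i0 *+ P (s i0) + (w i0 - b) *+ P [set j]
      + b *+ P rest.
Proof.
rewrite big_mkcond big_option /= [in RHS]big_mkcond /=.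
rewrite (bigD1 i0) //= [in RHS](bigD1 i0) //= eqxx.
rewrite (eq_bigr (fun i => if P (s i) then w i else 0)) => [|i /negbTE-> //].
rewrite !mulrb; case: (P (s i0)); case: (P rest); case: (P [set j]); lra.
Qed.

Lemma split_normal b :
  (forall S, split_lb S <= b <= split_ub S) ->
  fam_normal t T split_set (split_weight b).
Proof.
move=> b_bounds S; move: (b_bounds S) (normal S).
rewrite /split_lb /split_ub /fam_M /fam_m.
rewrite (sum_split b (fun X => intersects X S)) (sum_split b (fun X => X \subset S)) /=.
rewrite intersects1l sub1set intersects_split subset_split !mulrb.
by case: (j \in S); case: (intersects rest S); case: (rest \subset S)
  => /= /andP[lb ub] [tM mT]; split; lra.
Qed.

Lemma split_satisfiable b :
  fam_satisfiable t T split_set (split_weight b) -> fam_satisfiable t T s w.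
Proof.
case=> x [x_ge0 x_out x_sum x_load].
exists (fun i k => if i == i0 then x (Some i0) k + x None k else x (Some i) k).
split=> [i k|i k|i|k].
- by case: eqP => _; rewrite ?addr_ge0 ?x_ge0.
- case: (eqVneq i i0) => [-> k_out|ne k_out]; last by rewrite x_out //= (negbTE ne).
  rewrite !x_out ?addr0 //= ?eqxx ?inE ?(negbTE k_out) ?andbF //.
  by apply: contraNneq k_out => ->.
- case: (eqVneq i i0) => [->|ne]; last by rewrite x_sum /= (negbTE ne).
  by rewrite big_split !x_sum /= eqxx; lra.
- rewrite (bigD1 i0) //= eqxx (eq_bigr (fun i => x (Some i) k)) => [|i /negbTE-> //].
  move: (x_load k); rewrite big_option (bigD1 i0) //= => /andP[lo hi].
  by apply/andP; split; lra.
Qed.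

Lemma split_set_neq0 : (forall i, s i != set0) -> forall o, split_set o != set0.
Proof.
move=> s_neq0 [i|] /=; last by apply/set0Pn; exists j; rewrite inE.
by case: (i == i0).
Qed.

Lemma split_weight_ge0 b : 0 <= b <= w i0 -> forall o, 0 <= split_weight b o.
Proof.
case/andP=> b_ge0 b_le [i|] /=; last by rewrite subr_ge0.
by case: (i == i0).
Qed.

Lemma excess_split : (excess split_set < excess s)%N.
Proof.
rewrite /excess big_option /= cards1 add0n (bigD1 i0) //= [X in (_ < X)%N](bigD1 i0) //=.
rewrite eqxx (eq_bigr (fun i => (#|s i|).-1)) => [|i /negbTE-> //].
rewrite ltn_add2r [#|s i0|](cardsD1 j) j_in add1n /=.
by rewrite prednK // card_gt0.
Qed.

Lemma split_lb0 : split_lb set0 = 0.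
Proof. by rewrite /split_lb inE /intersects setI0 eqxx. Qed.

Lemma split_ub0 : split_ub set0 = w i0.
Proof. by rewrite /split_ub inE subset0 (negbTE rest_neq0). Qed.

Lemma exists_split_weight :
  exists2 b, 0 <= b <= w i0 & fam_normal t T split_set (split_weight b).
Proof.
pose b := \big[Num.max/0]_S split_lb S.
have lb_le S : split_lb S <= b by apply: le_bigmax.
have le_ub S : b <= split_ub S.
  by apply: bigmax_le => [|S' _]; rewrite ?split_lb_le_ub // -split_lb0 split_lb_le_ub.
exists b; first by rewrite -{1}split_lb0 -split_ub0 lb_le le_ub.
by apply: split_normal => S; rewrite lb_le le_ub.
Qed.

End Split.

Section Satisfiability.
Variables (R : realFieldType) (n : nat) (t T : 'I_n -> R).
Hypothesis tT : forall j, t j <= T j.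

Lemma singletons_satisfiable (I : finType) (s : I -> {set 'I_n}) (w : I -> R) :
  (forall i, #|s i| = 1%N) -> (forall i, 0 <= w i) -> fam_normal t T s w ->
  fam_satisfiable t T s w.
Proof.
move=> s_card1 w_ge0 normal.
exists (fun i k => if k \in s i then w i else 0).
split=> [i k|i k /negbTE-> //|i|k].
- by case: ifP.
- by rewrite -big_mkcond /= sumr_const s_card1.
- have [tM mT] := normal [set k]; move: tM mT; rewrite /dc_t !big_set1.
  have load_M : fam_M s w [set k] = \sum_i (if k \in s i then w i else 0).
    by rewrite /fam_M big_mkcond; apply: eq_bigr => i _; rewrite intersects1r.
  have load_m : fam_m s w [set k] = \sum_i (if k \in s i then w i else 0).
    rewrite /fam_m big_mkcond; apply: eq_bigr => i _.
    by have /eqP/cards1P[a ->] := s_card1 i; rewrite sub1set !inE eq_sym.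
  by rewrite load_M load_m => -> ->.
Qed.

Theorem fam_normal_satisfiable (I : finType) (s : I -> {set 'I_n}) (w : I -> R) :
  (forall i, s i != set0) -> (forall i, 0 <= w i) -> fam_normal t T s w ->
  fam_satisfiable t T s w.
Proof.
have [k] := ubnP (excess s); elim: k => // k IH in I s w *.
move=> lt_sk s_neq0 w_ge0 normal.
case: (pickP (fun i => 1 < #|s i|)%N) => [i0 /= big_i0 | small]; last first.
  apply: singletons_satisfiable => // i; apply/eqP; rewrite eqn_leq card_gt0 s_neq0.
  by move: (small i) => /= /negbT; rewrite -leqNgt => ->.
have [j j_in] := set0Pn _ (s_neq0 i0).
have rest_neq0 : s i0 :\ j != set0.
  by move: big_i0; rewrite (cardsD1 j) j_in add1n ltnS card_gt0.
have [b b_range split_normal] := exists_split_weight tT w_ge0 normal j_in rest_neq0.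
apply: (split_satisfiable j_in (b := b)); apply: IH split_normal.
- exact: leq_trans (excess_split j_in rest_neq0) _.
- exact: split_set_neq0.
- exact: split_weight_ge0.
Qed.

End Satisfiability.

Section NonemptySets.
Variables (R : realFieldType) (n : nat) (mu : {set 'I_n} -> R).

Definition nonempty_sets : {set {set 'I_n}} := [set Q | Q != set0].

Definition mu_family (i : {Q in nonempty_sets}) : R := mu (val i).

Lemma nonempty_val_neq0 (i : {Q in nonempty_sets}) : val i != set0.
Proof. by have := valP i; rewrite inE. Qed.

Lemma sum_nonempty_sets (P : pred {set 'I_n}) (F : {set 'I_n} -> R) :
  {subset P <= nonempty_sets} ->
  \sum_(Q | P Q) F Q = \sum_(i : {Q in nonempty_sets} | P (val i)) F (val i).
Proof.
move=> sP; rewrite (eq_bigl (fun Q => (Q \in nonempty_sets) && P Q)) ?big_sub_cond //.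
by move=> Q; case PQ: (P Q); rewrite ?andbT ?andbF ?sP.
Qed.

Lemma fam_M_nonempty_sets S : fam_M val mu_family S = dc_M mu S.
Proof.
rewrite /dc_M (sum_nonempty_sets (P := fun Q => intersects Q S)) // => Q.
by rewrite !inE; apply: contraNneq => ->; rewrite set0I.
Qed.

Lemma fam_m_nonempty_sets S : fam_m val mu_family S = dc_m mu S.
Proof.
rewrite /dc_m (sum_nonempty_sets (P := fun Q => (Q != set0) && (Q \subset S))).
  by apply: eq_bigl => i; rewrite nonempty_val_neq0.
by move=> Q /andP[]; rewrite inE.
Qed.

Lemma dc_normal_family (t T : 'I_n -> R) :
  dc_normal mu t T -> fam_normal t T val mu_family.
Proof.
move=> normal S; rewrite fam_M_nonempty_sets fam_m_nonempty_sets.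
case: (eqVneq S set0) => [->|]; last exact: normal.
rewrite /dc_t /dc_M /dc_m !big_set0 !big_pred0 // => Q.
  by rewrite subset0 andNb.
by rewrite setI0 eqxx.
Qed.

Lemma family_satisfiable_dc (t T : 'I_n -> R) :
  fam_satisfiable t T val mu_family -> dc_satisfiable mu t T.
Proof.
case=> x [x_ge0 x_out x_sum x_load].
exists (fun Q k => if insub Q is Some i then x i k else 0).
split; [|split; [|split]].
- by move=> Q k _; case: insubP.
- by move=> Q k _ k_out; case: insubP => // i _ iQ; rewrite x_out // iQ.
- move=> Q Q_neq0; case: insubP => [i _ <-|]; first exact: x_sum.
  by rewrite inE Q_neq0.
- move=> k; rewrite (sum_nonempty_sets (P := fun Q => Q != set0)) => [|Q]; last by rewrite inE.
  rewrite (eq_bigl xpredT) => [|i]; last exact: nonempty_val_neq0.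
  under eq_bigr do rewrite valK.
  exact: x_load.
Qed.

End NonemptySets.

Unset Implicit Arguments.

Theorem mainTheorem16 (R : realFieldType) (n : nat) (mu : {set 'I_n} -> R)
    (t T : 'I_n -> R) :
  dc_wf mu t T -> dc_normal mu t T -> dc_satisfiable mu t T.
Proof.
case=> mu_ge0 tT normal.
apply: family_satisfiable_dc; apply: fam_normal_satisfiable.
- by move=> j; case: (tT j).
- exact: nonempty_val_neq0.
- by move=> i; apply/mu_ge0/nonempty_val_neq0.
- exact: dc_normal_family.
Qed.
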